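(* Let $\Gamma$ be a finitely generated group with exactly $2$ ends, and let $S$ be any finite generating set of $\Gamma$ not containing the identity. Then the Cayley graph $G=\mathrm{Cay}(\Gamma,S)$ has a periodic proper vertex-coloring with $\chi(G)$ colors.
   Context: The Cayley graph $\mathrm{Cay}(\Gamma,S)$ has vertex set $\Gamma$, with $g,h$ adjacent iff $hg^{-1}\in S\cup S^{-1}$. The number of ends of a finitely generated group is the number of ends of any of its Cayley graphs with respect to finite generating sets (ends: equivalence classes of rays, two rays being equivalent if there are infinitely many disjoint paths between them). $\chi(G)$ is the chromatic number. A vertex-coloring of $G$ is periodic if the subgroup of automorphisms of $G$ mapping every vertex to a vertex of the same color has finitely many orbits on $V(G)$. *)

From Stdlib Require Import List Arith.
Import ListNotations.

Record group := Group {
  carrier :> Type;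
  gmul : carrier -> carrier -> carrier;
  ginv : carrier -> carrier;
  gone : carrier;
  gmulA : forall x y z, gmul x (gmul y z) = gmul (gmul x y) z;
  gmul1 : forall x, gmul gone x = x;
  gmulV : forall x, gmul (ginv x) x = gone
}.

Arguments gmul {g}.
Arguments ginv {g}.
Arguments gone {g}.

Definition word_prod {G : group} (w : list G) : G :=
  fold_right gmul gone w.

Definition in_symm {G : group} (S : list G) (x : G) : Prop :=
  In x S \/ In (ginv x) S.

Definition generates {G : group} (S : list G) : Prop :=
  forall g : G, exists w : list G,
    (forall x, In x w -> in_symm S x) /\ word_prod w = g.

Definition cayley_adj {G : group} (S : list G) (g h : G) : Prop :=
  in_symm S (gmul h (ginv g)).

Section Graphs.
Variable V : Type.
Variable adj : V -> V -> Prop.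

Definition is_ray (r : nat -> V) : Prop :=
  (forall m n, r m = r n -> m = n) /\ (forall n, adj (r n) (r (S n))).

Definition is_path (len : nat) (f : nat -> V) : Prop :=
  forall i, i < len -> adj (f i) (f (S i)).

Definition path_between (r1 r2 : nat -> V) (p : nat * (nat -> V)) : Prop :=
  is_path (fst p) (snd p) /\
  (exists m, snd p 0 = r1 m) /\ (exists n, snd p (fst p) = r2 n).

Definition paths_disjoint (p q : nat * (nat -> V)) : Prop :=
  forall a b, a <= fst p -> b <= fst q -> snd p a <> snd q b.

Definition rays_equiv (r1 r2 : nat -> V) : Prop :=
  exists P : nat -> nat * (nat -> V),
    (forall i, path_between r1 r2 (P i)) /\
    (forall i j, i <> j -> paths_disjoint (P i) (P j)).

Definition has_exactly_two_ends : Prop :=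
  exists r1 r2, is_ray r1 /\ is_ray r2 /\ ~ rays_equiv r1 r2 /\
    forall r, is_ray r -> rays_equiv r r1 \/ rays_equiv r r2.

Definition proper_coloring (k : nat) (c : V -> nat) : Prop :=
  (forall v, c v < k) /\ (forall u v, adj u v -> c u <> c v).

Definition colorable (k : nat) : Prop := exists c, proper_coloring k c.

Definition is_chromatic_number (k : nat) : Prop :=
  colorable k /\ forall j, colorable j -> k <= j.

Definition is_automorphism (f : V -> V) : Prop :=
  (exists g : V -> V, (forall x, g (f x) = x) /\ (forall y, f (g y) = y)) /\
  (forall x y, adj x y <-> adj (f x) (f y)).

(* the group of colour-preserving automorphisms has finitely many orbits *)
Definition periodic_coloring {C : Type} (c : V -> C) : Prop :=
  exists reps : list V, forall v, exists w, In w reps /\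
    exists f, is_automorphism f /\ (forall x, c (f x) = c x) /\ f w = v.

End Graphs.

Arguments is_ray {V}.
Arguments has_exactly_two_ends {V}.
Arguments proper_coloring {V}.
Arguments is_chromatic_number {V}.
Arguments periodic_coloring {V} adj {C} c.

(* Γ is finitely generated with exactly 2 ends: some (hence every) Cayley
   graph w.r.t. a finite generating set has exactly two ends. *)
Definition group_two_ended (G : group) : Prop :=
  exists S0 : list G, generates S0 /\ has_exactly_two_ends (cayley_adj S0).

(* Fix a finite generating set S0 and two rays representing the two ends of Cay(Γ,S0).
   Some finite connected set K separates them; let Sa, Sb be the sets of vertices joined
   to the tails of the two rays outside K. Only finitely many vertices lie outside
   Sa ∪ Sb (an infinite such region would contain, by König's lemma, a ray separated from
   both ends), and a suitable right translation by some z maps the complement of Sa into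
   Sb. The translates K z^m are then pairwise disjoint, and the height h v, the largest m
   with v z^(-m) ∈ Sa, satisfies h (g z^j) = h g + j, changes by a bounded amount along
   the edges of Cay(Γ,S) for any finite S, and has finite level sets.

   Such a height makes Cay(Γ,S) a strip. Take a proper colouring with χ colours. If C
   bounds the jumps of h, a window of C+1 consecutive levels is finite, so by pigeonhole
   two windows, at levels m1 and m1+P with P > C, carry the same colours up to translation
   by z^P. Repeating the colouring of the levels [m1, m1+P) gives a proper colouring
   invariant under the automorphism g ↦ g z^P, whose orbits all meet those finitely many
   levels. *)

From Stdlib Require Import List Arith ZArith Lia Classical ClassicalEpsilon FinFun.
Import ListNotations.

Section GroupTheory.
Variable G : group.
Local Infix "**" := (@gmul G) (at level 40, left associativity).

Lemma gmulV_r (x : G) : x ** ginv x = gone.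
Proof.
  rewrite <- (gmul1 G (x ** ginv x)), <- (gmulV G (ginv x)) at 1.
  rewrite <- gmulA, (gmulA G (ginv x) x), gmulV, gmul1.
  apply gmulV.
Qed.

Lemma gmul1_r (x : G) : x ** gone = x.
Proof. rewrite <- (gmulV G x), gmulA, gmulV_r, gmul1. reflexivity. Qed.

Lemma gmul_cancel_l (a x y : G) : a ** x = a ** y -> x = y.
Proof.
  intro E. rewrite <- (gmul1 G x), <- (gmul1 G y), <- (gmulV G a), <- !gmulA, E.
  reflexivity.
Qed.

Lemma gmul_cancel_r (a x y : G) : x ** a = y ** a -> x = y.
Proof.
  intro E. rewrite <- (gmul1_r x), <- (gmul1_r y), <- (gmulV_r a), !gmulA, E.
  reflexivity.
Qed.

Lemma ginvK (x : G) : ginv (ginv x) = x.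
Proof. apply (gmul_cancel_l (ginv x)). rewrite gmulV_r, gmulV. reflexivity. Qed.

Lemma ginvM (x y : G) : ginv (x ** y) = ginv y ** ginv x.
Proof.
  apply (gmul_cancel_l (x ** y)).
  rewrite gmulV_r, <- gmulA, (gmulA G y), gmulV_r, gmul1, gmulV_r. reflexivity.
Qed.

Lemma ginv1 : ginv (@gone G) = gone.
Proof. rewrite <- (gmul1_r (ginv gone)). apply gmulV. Qed.

Lemma gmulK (x y : G) : x ** y ** ginv y = x.
Proof. rewrite <- gmulA, gmulV_r, gmul1_r. reflexivity. Qed.

Lemma gmulKV (x y : G) : x ** ginv y ** y = x.
Proof. rewrite <- gmulA, gmulV, gmul1_r. reflexivity. Qed.

Fixpoint npow (z : G) (n : nat) : G :=
  match n with O => gone | S m => npow z m ** z end.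

Definition zpow (z : G) (j : Z) : G :=
  if Z.leb 0 j then npow z (Z.to_nat j) else npow (ginv z) (Z.to_nat (- j)).

Local Open Scope Z_scope.

Lemma zpow0 z : zpow z 0 = gone.
Proof. reflexivity. Qed.

Lemma zpow1 z : zpow z 1 = z.
Proof. apply gmul1. Qed.

Lemma zpowS z j : zpow z (j + 1) = zpow z j ** z.
Proof.
  unfold zpow. destruct (Z.leb_spec 0 j), (Z.leb_spec 0 (j + 1)); try lia.
  - replace (Z.to_nat (j + 1)) with (S (Z.to_nat j)) by lia. reflexivity.
  - replace j with (-1) by lia. simpl. rewrite gmul1, gmulV. reflexivity.
  - replace (Z.to_nat (- j)) with (S (Z.to_nat (- (j + 1)))) by lia. simpl.
    rewrite gmulKV. reflexivity.
Qed.

Lemma zpowP z j : zpow z (j - 1) = zpow z j ** ginv z.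
Proof. replace j with (j - 1 + 1) at 2 by lia. rewrite zpowS, gmulK. reflexivity. Qed.

Lemma zpowD z a b : zpow z (a + b) = zpow z a ** zpow z b.
Proof.
  revert a. induction b as [|b IH|b IH] using Z.peano_ind; intro a.
  - rewrite Z.add_0_r, zpow0, gmul1_r. reflexivity.
  - rewrite <- Z.add_1_r, Z.add_assoc, !zpowS, IH, gmulA. reflexivity.
  - rewrite <- Z.sub_1_r, Z.add_sub_assoc, !zpowP, IH, gmulA. reflexivity.
Qed.

Lemma zpowN z a : zpow z (- a) = ginv (zpow z a).
Proof.
  apply (gmul_cancel_l (zpow z a)).
  rewrite <- zpowD, gmulV_r, Z.add_opp_diag_r. reflexivity.
Qed.

Lemma gmul_zpowD g z a b : g ** zpow z a ** zpow z b = g ** zpow z (a + b).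
Proof. rewrite <- gmulA, <- zpowD. reflexivity. Qed.

End GroupTheory.

Lemma pigeonhole {A : Type} (f : nat -> A) (l : list A) :
  (forall i, In (f i) l) -> exists i j, i < j /\ f i = f j.
Proof.
  intro Hin. apply NNPP. intro Hno.
  assert (Hinj : forall i j, f i = f j -> i = j).
  { intros i j E. destruct (Nat.lt_trichotomy i j) as [H|[H|H]]; auto;
      exfalso; apply Hno; eauto. }
  assert (Hnd : NoDup (map f (seq 0 (S (length l))))).
  { apply Injective_map_NoDup; [intros a b; apply Hinj|apply seq_NoDup]. }
  assert (Hincl : incl (map f (seq 0 (S (length l)))) l).
  { intros x Hx. apply in_map_iff in Hx. destruct Hx as [i [<- _]]. apply Hin. }
  pose proof (NoDup_incl_length Hnd Hincl) as Hlen.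
  rewrite length_map, length_seq in Hlen. lia.
Qed.

Lemma pigeonhole_rel {A : Type} (R : nat -> A -> Prop) (l : list A) :
  (forall i, exists x, In x l /\ R i x) -> exists i j x, i < j /\ R i x /\ R j x.
Proof.
  intro H. destruct (choice _ H) as [f Hf].
  destruct (pigeonhole f l (fun i => proj1 (Hf i))) as [i [j [Hij E]]].
  exists i, j, (f i). split; [|split]; [exact Hij|apply Hf|rewrite E; apply Hf].
Qed.

Lemma ex_least_nat (P : nat -> Prop) :
  (exists n, P n) -> exists n, P n /\ forall m, P m -> n <= m.
Proof.
  intro H.
  destruct (dec_inh_nat_subset_has_unique_least_element P (fun n => classic (P n)) H)
    as [n [[Pn Hleast] _]].
  eauto.
Qed.

Lemma Z_crossing (P : Z -> Prop) d a :
  P a -> ~ P (a + Z.of_nat d)%Z -> exists m, P m /\ ~ P (m + 1)%Z.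
Proof.
  revert a. induction d as [|d IH]; intros a Ha Hb.
  - exfalso. apply Hb. rewrite Z.add_0_r. exact Ha.
  - destruct (classic (P (a + Z.of_nat d)%Z)) as [H|H]; [|exact (IH a Ha H)].
    exists (a + Z.of_nat d)%Z. split; [exact H|]. rewrite Nat2Z.inj_succ, <- Z.add_1_r, Z.add_assoc in Hb.
    exact Hb.
Qed.

Lemma Z_eq_of_mod_eq (a b n : Z) : (0 < n)%Z -> (Z.abs (a - b) < n)%Z ->
  (a mod n = b mod n)%Z -> a = b.
Proof.
  intros Hn Hab E.
  pose proof (Z.div_mod a n ltac:(lia)). pose proof (Z.div_mod b n ltac:(lia)).
  assert (Hq : (a / n = b / n)%Z) by nia. nia.
Qed.

Lemma nat_mul_add_inj (a b i j N : nat) : i < N -> j < N -> a * N + i = b * N + j -> a = b /\ i = j.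
Proof.
  intros Hi Hj E. destruct (Nat.lt_trichotomy a b) as [H|[H|H]].
  - exfalso. assert (a * N + N <= b * N) by nia. lia.
  - subst. lia.
  - exfalso. assert (b * N + N <= a * N) by nia. lia.
Qed.

Fixpoint all_words (k n : nat) : list (list nat) :=
  match n with
  | O => [[]]
  | S m => flat_map (fun x => map (cons x) (all_words k m)) (seq 0 k)
  end.

Lemma in_all_words k n l : length l = n -> (forall x, In x l -> x < k) -> In l (all_words k n).
Proof.
  revert l. induction n as [|n IH]; intros l Hl Hk.
  - destruct l; [left; reflexivity|discriminate].
  - destruct l as [|x l]; [discriminate|]. apply in_flat_map. exists x. split.
    + apply in_seq. specialize (Hk x (or_introl eq_refl)). lia.
    + apply in_map, IH; [simpl in Hl; lia|]. intros y Hy. apply Hk. right. exact Hy.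
Qed.

Lemma in_map_seq {A : Type} (r : nat -> A) N a : a < N -> In (r a) (map r (seq 0 N)).
Proof. intro H. apply in_map, in_seq. lia. Qed.

Section Walks.
Context {V : Type} (adj : V -> V -> Prop).
Hypothesis adj_sym : forall u v, adj u v -> adj v u.

Definition walk (a b : V) (n : nat) (f : nat -> V) : Prop :=
  is_path V adj n f /\ f 0 = a /\ f n = b.

Definition within (R : V -> Prop) (n : nat) (f : nat -> V) : Prop :=
  forall i, i <= n -> R (f i).

Definition avoids (K : list V) (n : nat) (f : nat -> V) : Prop :=
  forall i, i <= n -> ~ In (f i) K.

Lemma walk_nil a : walk a a 0 (fun _ => a).
Proof. split; [|split; reflexivity]. intros i Hi. lia. Qed.

Lemma walk_one a b : adj a b -> walk a b 1 (fun i => if i =? 0 then a else b).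
Proof.
  intro H. split; [|split; reflexivity]. intros i Hi. replace i with 0 by lia. exact H.
Qed.

Lemma walk_app a b c n m f g : walk a b n f -> walk b c m g ->
  walk a c (n + m) (fun i => if i <=? n then f i else g (i - n)).
Proof.
  intros [Hf [Hf0 Hfn]] [Hg [Hg0 Hgm]]. split; [|split].
  - intros i Hi. destruct (Nat.leb_spec i n), (Nat.leb_spec (S i) n); try lia.
    + apply Hf. lia.
    + replace i with n by lia. rewrite Hfn, <- Hg0, Nat.sub_succ_l, Nat.sub_diag by lia.
      apply Hg. lia.
    + rewrite Nat.sub_succ_l by lia. apply Hg. lia.
  - exact Hf0.
  - destruct (Nat.leb_spec (n + m) n).
    + replace m with 0 in * by lia. rewrite Nat.add_0_r, Hfn, <- Hg0, Hgm. reflexivity.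
    + rewrite Nat.add_comm, Nat.add_sub. exact Hgm.
Qed.

Lemma within_app R n m f g : within R n f -> within R m g ->
  within R (n + m) (fun i => if i <=? n then f i else g (i - n)).
Proof. intros Hf Hg i Hi. destruct (Nat.leb_spec i n); [apply Hf|apply Hg]; lia. Qed.

Lemma walk_rev a b n f : walk a b n f -> walk b a n (fun i => f (n - i)).
Proof.
  intros [Hp [H0 Hn]]. split; [|split].
  - intros i Hi. apply adj_sym. replace (n - i) with (S (n - S i)) by lia. apply Hp. lia.
  - rewrite Nat.sub_0_r. exact Hn.
  - rewrite Nat.sub_diag. exact H0.
Qed.

Lemma walk_prefix a b n f i : walk a b n f -> i <= n -> walk a (f i) i f.
Proof. intros [Hp [H0 _]] Hi. split; [|split; auto]. intros j Hj. apply Hp. lia. Qed.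

Lemma walk_behead a c n f : walk a c (S n) f -> walk (f 1) c n (fun i => f (S i)).
Proof. intros [Hp [_ Hn]]. split; [|split; auto]. intros j Hj. apply Hp. lia. Qed.

Definition closed_off (K : list V) (W : V -> Prop) : Prop :=
  forall v w, W v -> ~ In v K -> adj v w -> ~ In w K -> W w.

Lemma closed_off_compl K W : closed_off K W -> closed_off K (fun v => ~ W v).
Proof. intros H v w Hv HvK Hvw HwK Hw. apply Hv, (H w v); auto. Qed.

Lemma closed_off_incl K K' W : incl K K' -> closed_off K W -> closed_off K' W.
Proof. intros Hi H v w Hv HvK Hvw HwK. apply (H v w); auto. Qed.

Lemma closed_off_and K W W' :
  closed_off K W -> closed_off K W' -> closed_off K (fun v => W v /\ W' v).
Proof. intros H H' v w [Hv Hv'] HvK Hvw HwK. split; [apply (H v w)|apply (H' v w)]; auto. Qed.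

Lemma closed_off_ext K (W W' : V -> Prop) :
  (forall v, W v <-> W' v) -> closed_off K W -> closed_off K W'.
Proof. intros E H v w Hv HvK Hvw HwK. apply E, (H v w); auto. apply E, Hv. Qed.

Lemma path_stays K W n f :
  closed_off K W -> is_path V adj n f -> W (f 0) -> avoids K n f -> W (f n).
Proof.
  intros Hc Hp H0 Ha.
  assert (Hall : forall i, i <= n -> W (f i)).
  { induction i as [|i IH]; intro Hi; auto.
    apply (Hc (f i)); [apply IH; lia|apply Ha; lia|apply Hp; lia|apply Ha; lia]. }
  auto.
Qed.

Lemma path_crosses K W n f : closed_off K W -> is_path V adj n f -> W (f 0) -> ~ W (f n) ->
  exists i, i <= n /\ In (f i) K.
Proof.
  intros Hc Hp H0 Hn. apply NNPP. intro Hno.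
  apply Hn, (path_stays K); auto. intros i Hi HK. eauto.
Qed.

Definition side (K : list V) (r : nat -> V) (v : V) : Prop :=
  exists n f m, walk v (r m) n f /\ avoids K n f.

Lemma side_notin K r v : side K r v -> ~ In v K.
Proof. intros [n [f [m [[_ [H0 _]] Ha]]]]. rewrite <- H0. apply Ha. lia. Qed.

Lemma side_closed K r : closed_off K (side K r).
Proof.
  intros v w [n [f [m [Hf Ha]]]] HvK Hvw HwK. exists (1 + n). eexists. exists m. split.
  - eapply walk_app; [apply walk_one, adj_sym, Hvw|exact Hf].
  - intros i Hi. destruct (Nat.leb_spec i 1).
    + destruct (Nat.eqb_spec i 0); auto.
    + apply Ha. lia.
Qed.

Lemma side_of_ray K r m : ~ In (r m) K -> side K r (r m).
Proof. intro H. exists 0, (fun _ => r m), m. split; [apply walk_nil|intros i _; exact H]. Qed.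

Lemma ray_eventually_avoids r F : is_ray adj r -> exists N, forall n, N <= n -> ~ In (r n) F.
Proof.
  intros [Hinj _]. induction F as [|x F [N HN]].
  - exists 0. intros n _ [].
  - destruct (classic (exists n, r n = x)) as [[n0 <-]|Hno].
    + exists (Nat.max N (S n0)). intros n Hn [E|E].
      * apply Hinj in E. lia.
      * apply (HN n); auto. lia.
    + exists N. intros n Hn [E|E]; [apply Hno; eauto|apply (HN n); auto].
Qed.

Lemma ray_not_eventually_in r N L : is_ray adj r -> ~ (forall n, N <= n -> In (r n) L).
Proof.
  intros [Hinj _] H. destruct (pigeonhole (fun i => r (N + i)) L) as [i [j [Hij E]]].
  - intro i. apply H. lia.
  - apply Hinj in E. lia.
Qed.

Lemma ray_tail_closed_off K W r N : is_ray adj r -> (forall n, N <= n -> ~ In (r n) K) ->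
  closed_off K W -> forall n, N <= n -> (W (r N) <-> W (r n)).
Proof.
  intros [_ Hr] Hav Hc n Hn.
  assert (Hstay : forall W', closed_off K W' -> W' (r N) -> W' (r n)).
  { intros W' Hc' H. replace n with (N + (n - N)) by lia.
    apply (path_stays K W' (n - N) (fun i => r (N + i)) Hc').
    - intros i _. rewrite Nat.add_succ_r. apply Hr.
    - rewrite Nat.add_0_r. exact H.
    - intros i _. apply Hav. lia. }
  split; [apply Hstay, Hc|]. intro H. apply NNPP. intro H'.
  exact (Hstay _ (closed_off_compl K W Hc) H' H).
Qed.

Definition separates (F : list V) (r r' : nat -> V) : Prop :=
  forall p, path_between V adj r r' p -> exists a, a <= fst p /\ In (snd p a) F.

Lemma separates_incl F F' r r' : incl F F' -> separates F r r' -> separates F' r r'.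
Proof. intros Hi H p Hp. destruct (H p Hp) as [a [Ha Hin]]. eauto. Qed.

Lemma separates_sym F r r' : separates F r r' -> separates F r' r.
Proof.
  intros Hs [n f] [Hp [[m Hm] [m' Hm']]]. simpl in *.
  destruct (Hs (n, fun i => f (n - i))) as [a [Ha Hin]].
  - destruct (walk_rev (f 0) (f n) n f (conj Hp (conj eq_refl eq_refl))) as [Hp' [H0 Hn]].
    split; [exact Hp'|split]; [exists m'|exists m]; simpl; congruence.
  - exists (n - a). simpl in *. split; [lia|exact Hin].
Qed.

Lemma separates_not_equiv F r r' : separates F r r' -> ~ rays_equiv V adj r r'.
Proof.
  intros Hs [P [HP Hd]].
  destruct (pigeonhole_rel (fun i x => exists a, a <= fst (P i) /\ snd (P i) a = x) F)
    as [i [j [x [Hij [[a [Ha Ea]] [b [Hb Eb]]]]]]].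
  - intro i. destruct (Hs (P i) (HP i)) as [a [Ha Hin]]. eauto.
  - apply (Hd i j) with a b; [lia|auto|auto|congruence].
Qed.

(* Menger-type converse: if every finite set is avoided by some path, choosing each
   path to avoid all previously chosen ones gives infinitely many disjoint paths. *)
Lemma not_equiv_separates r r' : ~ rays_equiv V adj r r' -> exists F, separates F r r'.
Proof.
  intro Hne. apply NNPP. intro Hno.
  assert (Hav : forall F, exists p, path_between V adj r r' p /\
                                    forall a, a <= fst p -> ~ In (snd p a) F).
  { intro F. apply NNPP. intro H. apply Hno. exists F. intros p Hp. apply NNPP. intro H2.
    apply H. exists p. split; auto. intros a Ha Hin. eauto. }
  destruct (choice _ Hav) as [ch Hch].
  set (verts := fun p : nat * (nat -> V) => map (snd p) (seq 0 (S (fst p)))).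
  set (acc := fix acc n := match n with O => [] | S m => acc m ++ verts (ch (acc m)) end).
  assert (Hmono : forall i j x, i <= j -> In x (acc i) -> In x (acc j)).
  { intros i j x Hij. induction Hij; auto. intro H. apply in_or_app. auto. }
  assert (Hlt : forall i j, i < j -> paths_disjoint V (ch (acc i)) (ch (acc j))).
  { intros i j Hij a b Ha Hb E. apply (proj2 (Hch (acc j)) b Hb). rewrite <- E.
    apply (Hmono (S i)); auto. apply in_or_app. right. exact (in_map_seq _ _ _ (le_n_S _ _ Ha)). }
  apply Hne. exists (fun i => ch (acc i)). split; [intro i; apply Hch|].
  intros i j Hij. destruct (Nat.lt_trichotomy i j) as [H|[H|H]]; [auto|congruence|].
  intros a b Ha Hb E. apply (Hlt j i H b a); auto.
Qed.

Lemma closed_off_separates K W r r' N N' : closed_off K W ->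
  (forall a, N <= a -> W (r a)) -> (forall b, N' <= b -> ~ W (r' b)) ->
  separates (K ++ map r (seq 0 N) ++ map r' (seq 0 N')) r r'.
Proof.
  intros Hc Hr Hr' [n f] [Hp [[a Ha] [b Hb]]]. simpl in *.
  destruct (Nat.lt_ge_cases a N) as [HaN|HaN].
  { exists 0. split; [lia|]. rewrite Ha, !in_app_iff. right; left. apply in_map_seq, HaN. }
  destruct (Nat.lt_ge_cases b N') as [HbN|HbN].
  { exists n. split; [lia|]. rewrite Hb, !in_app_iff. right; right. apply in_map_seq, HbN. }
  destruct (path_crosses K W n f Hc Hp) as [i [Hi Hin]].
  - rewrite Ha. apply Hr, HaN.
  - rewrite Hb. apply Hr', HbN.
  - exists i. rewrite !in_app_iff. auto.
Qed.

Lemma connected_superset k0 F : (forall y, exists n f, walk k0 y n f) ->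
  exists K, In k0 K /\ incl F K /\
    forall k, In k K -> exists n f, walk k0 k n f /\ within (fun v => In v K) n f.
Proof.
  intro Hconn. destruct (choice (fun y p => walk k0 y (fst p) (snd p))) as [pth Hpth].
  { intro y. destruct (Hconn y) as [n [f H]]. exists (n, f). exact H. }
  set (K := k0 :: flat_map (fun y => map (snd (pth y)) (seq 0 (S (fst (pth y))))) F).
  assert (HK : forall y i, In y F -> i <= fst (pth y) -> In (snd (pth y) i) K).
  { intros y i Hy Hi. right. apply in_flat_map. exists y. split; [exact Hy|].
    apply in_map_seq. lia. }
  exists K. split; [left; reflexivity|split].
  - intros y Hy. destruct (Hpth y) as [_ [_ Hn]]. rewrite <- Hn. apply HK; auto.
  - intros k [<-|Hk].
    + exists 0, (fun _ => k0). split; [apply walk_nil|intros i _; left; reflexivity].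
    + apply in_flat_map in Hk. destruct Hk as [y [Hy Hk]]. apply in_map_iff in Hk.
      destruct Hk as [i [<- Hi]]. apply in_seq in Hi. exists i, (snd (pth y)). split.
      * apply (walk_prefix k0 y (fst (pth y))); [apply Hpth|lia].
      * intros j Hj. apply HK; auto. lia.
Qed.

End Walks.

Lemma list_ex_forall_antitone {A : Type} (P : nat -> A -> Prop) (l : list A) :
  (forall n, exists x, In x l /\ P n x) -> (forall n x, P (S n) x -> P n x) ->
  exists x, In x l /\ forall n, P n x.
Proof.
  intros H Hmon.
  assert (Hmon' : forall n m x, m <= n -> P n x -> P m x).
  { intros n m x Hmn. induction Hmn; auto. }
  induction l as [|a l IH].
  - destruct (H 0) as [x [[] _]].
  - destruct (classic (forall n, P n a)) as [Ha|Ha]; [exists a; split; [left|]; auto|].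
    apply not_all_ex_not in Ha. destruct Ha as [n0 Hn0].
    destruct IH as [x [Hx Hxp]]; [|exists x; split; [right|]; auto].
    intro n. destruct (H (n + n0)) as [x [[<-|Hx] Hp]].
    + exfalso. apply Hn0, (Hmon' (n + n0)); auto. lia.
    + exists x. split; auto. apply (Hmon' (n + n0)); auto. lia.
Qed.

Section Konig.
Context {V : Type} (adj : V -> V -> Prop) (nbrs : V -> list V).
Hypothesis nbrs_spec : forall u w, adj u w -> In w (nbrs u).

Fixpoint ball (v : V) (n : nat) : list V :=
  match n with O => [v] | S m => ball v m ++ flat_map nbrs (ball v m) end.

Lemma walk_in_ball v n : forall w m f, walk adj v w m f -> m <= n -> In w (ball v n).
Proof.
  induction n as [|n IH]; intros w m f Hw Hm.
  - replace m with 0 in Hw by lia. destruct Hw as [_ [H0 Hn]]. left. congruence.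
  - simpl. apply in_or_app. destruct (Nat.leb_spec m n); [left; eauto|right].
    replace m with (S n) in Hw by lia. apply in_flat_map. exists (f n). split.
    + apply (IH (f n) n f); auto. apply (walk_prefix adj v w (S n)); auto.
    + destruct Hw as [Hp [_ Hn]]. rewrite <- Hn. apply nbrs_spec, Hp. lia.
Qed.

Variable R : V -> Prop.
Variable v0 : V.
Hypothesis R_v0 : R v0.
Hypothesis R_connected : forall w, R w -> exists n f, walk adj v0 w n f /\ within R n f.
Hypothesis R_infinite : forall L : list V, exists w, R w /\ ~ In w L.

Definition walk_in u w m := exists f, walk adj u w m f /\ within R m f.

Lemma walk_in_app a b c n m : walk_in a b n -> walk_in b c m -> walk_in a c (n + m).
Proof.
  intros [f [Hf Hfi]] [g [Hg Hgi]]. eexists. split; [eapply walk_app; eauto|].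
  apply within_app; auto.
Qed.

Lemma walk_in_first a c n : walk_in a c (S n) -> exists b, adj a b /\ R b /\ walk_in b c n.
Proof.
  intros [f [Hf Hi]]. exists (f 1). destruct Hf as [Hp [H0 Hn]]. split; [|split].
  - rewrite <- H0. apply Hp. lia.
  - apply Hi. lia.
  - exists (fun i => f (S i)). split; [apply (walk_behead adj a); split; auto|].
    intros i Hi'. apply Hi. lia.
Qed.

Lemma walk_in_snoc a b c n : walk_in a b n -> adj b c -> R c -> walk_in a c (n + 1).
Proof.
  intros Hab Hbc Rc. apply (walk_in_app a b c n 1); auto.
  eexists. split; [apply walk_one; auto|]. intros i Hi. cbv beta.
  destruct (Nat.eqb_spec i 0); auto.
  destruct Hab as [f [[_ [_ Hn]] Hfi]]. rewrite <- Hn. apply Hfi. lia.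
Qed.

Definition dist_in w m := walk_in v0 w m /\ forall m', m' < m -> ~ walk_in v0 w m'.

Lemma dist_in_unique w m m' : dist_in w m -> dist_in w m' -> m = m'.
Proof.
  intros [H1 H2] [H3 H4].
  destruct (Nat.lt_trichotomy m m') as [H|[H|H]]; [|exact H|]; exfalso.
  - exact (H4 m H H1).
  - exact (H2 m' H H3).
Qed.

(* [w] lies on [R]-geodesics from [v0] to arbitrarily far vertices. *)
Definition on_long_geodesics w k :=
  dist_in w k /\ forall n, exists u m, dist_in u m /\ k + n <= m /\ walk_in w u (m - k).

Lemma on_long_geodesics_v0 : on_long_geodesics v0 0.
Proof.
  split.
  - split; [|intros m' H; lia].
    exists (fun _ => v0). split; [apply walk_nil|intros i _; exact R_v0].
  - intro n. destruct (R_infinite (ball v0 n)) as [u [Ru Hu]].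
    destruct (ex_least_nat (fun m => walk_in v0 u m)) as [m [Hm Hleast]].
    { destruct (R_connected u Ru) as [m [f H]]. exists m, f. exact H. }
    exists u, m. split; [split; auto; intros m' Hm' Hw; specialize (Hleast m' Hw); lia|].
    rewrite Nat.sub_0_r. split; auto.
    destruct (Nat.le_gt_cases m n); [|lia]. exfalso. apply Hu.
    destruct Hm as [f [Hf _]]. apply (walk_in_ball v0 n u m f); auto.
Qed.

(* Finitely many neighbours: one of them serves arbitrarily far vertices. *)
Lemma on_long_geodesics_step w k :
  on_long_geodesics w k -> exists w', adj w w' /\ on_long_geodesics w' (S k).
Proof.
  intros [Hd Hn].
  set (P := fun n b => adj w b /\ dist_in b (S k) /\
                       exists u m, dist_in u m /\ S k + n <= m /\ walk_in b u (m - S k)).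
  destruct (list_ex_forall_antitone P (nbrs w)) as [b [_ Hb]].
  - intro n. destruct (Hn (S n)) as [u [m [Hu [Hkm Hw]]]].
    replace (m - k) with (S (m - S k)) in Hw by lia.
    destruct (walk_in_first _ _ _ Hw) as [b [Hwb [Rb Hbu]]].
    exists b. split; [apply nbrs_spec; auto|].
    assert (Hdb : dist_in b (S k)).
    { split.
      - rewrite <- Nat.add_1_r. apply (walk_in_snoc v0 w b k); auto. apply Hd.
      - intros m' Hm' Hwm. apply (proj2 Hu (m' + (m - S k))); [lia|].
        apply (walk_in_app v0 b u); auto. }
    split; [|split]; auto. exists u, m. split; [|split]; auto. lia.
  - intros n x [H1 [H2 [u [m [H3 [H4 H5]]]]]].
    split; [|split]; auto. exists u, m. split; [|split]; auto. lia.
  - destruct (Hb 0) as [Hwb [Hdb _]]. exists b. split; [|split]; auto.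
    intro n. destruct (Hb n) as [_ [_ [u [m H]]]]. eauto.
Qed.

Lemma konig_ray : exists r, is_ray adj r /\ forall n, R (r n).
Proof.
  set (T := {p : V * nat | on_long_geodesics (fst p) (snd p)}).
  assert (Hstep : forall p : T, exists w', adj (fst (proj1_sig p)) w' /\
                                      on_long_geodesics w' (S (snd (proj1_sig p)))).
  { intros [[w k] H]. apply on_long_geodesics_step, H. }
  destruct (choice _ Hstep) as [nx Hnx].
  set (sq := fix sq (n : nat) : T :=
         match n with
         | O => exist _ (v0, 0) on_long_geodesics_v0
         | S m => exist (fun p => on_long_geodesics (fst p) (snd p))
                    (nx (sq m), S (snd (proj1_sig (sq m)))) (proj2 (Hnx (sq m)))
         end).
  assert (Hsnd : forall n, snd (proj1_sig (sq n)) = n) by (induction n; simpl; auto).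
  assert (Hgood : forall n, on_long_geodesics (fst (proj1_sig (sq n))) n).
  { intro n. rewrite <- (Hsnd n) at 2. exact (proj2_sig (sq n)). }
  exists (fun n => fst (proj1_sig (sq n))). split; [split|].
  - intros m n E. apply (dist_in_unique (fst (proj1_sig (sq n)))).
    + rewrite <- E. apply Hgood.
    + apply Hgood.
  - intro n. apply (proj1 (Hnx (sq n))).
  - intro n. destruct (Hgood n) as [[[f [[_ [_ Hfn]] Hfi]] _] _].
    rewrite <- Hfn. apply Hfi. lia.
Qed.

End Konig.

Section RaylessRegions.
Context {V : Type} (adj : V -> V -> Prop) (nbrs : V -> list V).
Hypothesis adj_sym : forall u v, adj u v -> adj v u.
Hypothesis nbrs_spec : forall u w, adj u w -> In w (nbrs u).
Hypothesis connected : forall a b, exists n f, walk adj a b n f.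

Variable J : list V.
Variable W : V -> Prop.
Hypothesis W_closed : closed_off adj J W.
Hypothesis W_disjoint : forall v, W v -> ~ In v J.
Hypothesis W_rayless : forall r, is_ray adj r -> ~ (forall n, W (r n)).

Definition reach_avoiding (u v : V) := exists n f, walk adj u v n f /\ avoids J n f.

Lemma reach_avoiding_finite u : W u -> exists L, forall v, reach_avoiding u v -> In v L.
Proof.
  intro Wu. apply NNPP. intro Hinf.
  destruct (konig_ray adj nbrs nbrs_spec (reach_avoiding u) u) as [r [Hr Hin]].
  - exists 0, (fun _ => u). split; [apply walk_nil|intros i _; apply W_disjoint, Wu].
  - intros w [n [f [Hf Ha]]]. exists n, f. split; auto. intros i Hi.
    exists i, f. split; [apply (walk_prefix adj u w n f i Hf Hi)|intros j Hj; apply Ha; lia].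
  - intro L. apply NNPP. intro H. apply Hinf. exists L. intros v Hv. apply NNPP. intro Hv'.
    apply H. eauto.
  - apply (W_rayless r Hr). intro n. destruct (Hin n) as [m [f [[Hp [H0 Hm]] Ha]]].
    rewrite <- Hm. apply (path_stays adj J W m f W_closed Hp); auto. congruence.
Qed.

Lemma reach_avoiding_from_nbrs v : W v -> J <> [] ->
  exists u, In u (flat_map nbrs J) /\ W u /\ reach_avoiding u v.
Proof.
  intros Wv HJ.
  assert (Hj : exists j, In j J) by (destruct J as [|j J']; [congruence|exists j; left; auto]).
  destruct Hj as [j Hj].
  destruct (connected v j) as [n [f Hf]].
  destruct (ex_least_nat (fun i => i <= n /\ In (f i) J)) as [i0 [[Hi0n Hi0J] Hleast]].
  { exists n. split; auto. destruct Hf as [_ [_ Hn]]. rewrite Hn. exact Hj. }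
  destruct i0 as [|i].
  { exfalso. destruct Hf as [_ [H0 _]]. rewrite H0 in Hi0J. exact (W_disjoint v Wv Hi0J). }
  assert (Hav : avoids J i f).
  { intros i' Hi' HiJ. assert (Hi'n : i' <= n) by lia.
    specialize (Hleast i' (conj Hi'n HiJ)). lia. }
  pose proof (walk_prefix adj v j n f i Hf ltac:(lia)) as Hpre.
  exists (f i). split; [|split].
  - apply in_flat_map. exists (f (S i)). split; auto.
    apply nbrs_spec, adj_sym. destruct Hf as [Hp _]. apply Hp. lia.
  - destruct Hpre as [Hp [H0 _]]. apply (path_stays adj J W i f W_closed Hp); auto.
    congruence.
  - exists i, (fun k => f (i - k)). split; [apply (walk_rev adj adj_sym v (f i) i f Hpre)|].
    intros k Hk. apply Hav. lia.
Qed.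

Lemma rayless_region_finite : (exists r, is_ray adj r) -> exists L, forall v, W v -> In v L.
Proof.
  intros [r Hr].
  assert (Hfin : forall u, exists L, W u -> forall v, reach_avoiding u v -> In v L).
  { intro u. destruct (classic (W u)) as [Wu|Wu].
    - destruct (reach_avoiding_finite u Wu) as [L HL]. eauto.
    - exists []. tauto. }
  destruct (choice _ Hfin) as [Lf HLf].
  exists (flat_map Lf (flat_map nbrs J)). intros v Wv.
  destruct (classic (J = [])) as [HJ|HJ].
  - exfalso. apply (W_rayless r Hr). intro n.
    destruct (connected v (r n)) as [m [f [Hp [H0 Hm]]]]. rewrite <- Hm.
    apply (path_stays adj J W m f W_closed Hp); [congruence|]. rewrite HJ. intros i _ [].
  - destruct (reach_avoiding_from_nbrs v Wv HJ) as [u [Hu [Wu Huv]]].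
    apply in_flat_map. exists u. split; [exact Hu|apply HLf; auto].
Qed.

End RaylessRegions.

Section TwoSides.
Context {V : Type} (adj : V -> V -> Prop) (nbrs : V -> list V).
Hypothesis adj_sym : forall u v, adj u v -> adj v u.
Hypothesis nbrs_spec : forall u w, adj u w -> In w (nbrs u).
Hypothesis connected : forall a b, exists n f, walk adj a b n f.

Variables ra rb : nat -> V.
Hypothesis ra_ray : is_ray adj ra.
Hypothesis rb_ray : is_ray adj rb.
Hypothesis two_ends : forall r, is_ray adj r -> rays_equiv V adj r ra \/ rays_equiv V adj r rb.

Variable K : list V.
Variable k0 : V.
Hypothesis k0_in_K : In k0 K.
Hypothesis K_connected :
  forall k, In k K -> exists n f, walk adj k0 k n f /\ within (fun v => In v K) n f.
Hypothesis K_separates : separates adj K ra rb.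

Local Notation Sa := (side adj K ra).
Local Notation Sb := (side adj K rb).

Lemma sides_disjoint v : Sa v -> Sb v -> False.
Proof.
  intros [n1 [f1 [m1 [Hf1 Ha1]]]] [n2 [f2 [m2 [Hf2 Ha2]]]].
  pose proof (walk_app adj _ _ _ _ _ _ _ (walk_rev adj adj_sym _ _ _ _ Hf1) Hf2) as Hw.
  destruct (K_separates (n1 + n2, fun i => if i <=? n1 then f1 (n1 - i) else f2 (i - n1)))
    as [a [Ha Hin]].
  - destruct Hw as [Hp [H0 Hn]]. split; [exact Hp|split; [exists m1|exists m2]; assumption].
  - simpl in *. destruct (Nat.leb_spec a n1).
    + apply (Ha1 (n1 - a)); auto. lia.
    + apply (Ha2 (a - n1)); auto. lia.
Qed.

Lemma sides_eventually : exists N, forall n, N <= n -> Sa (ra n) /\ Sb (rb n).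
Proof.
  destruct (ray_eventually_avoids adj ra K ra_ray) as [N1 H1].
  destruct (ray_eventually_avoids adj rb K rb_ray) as [N2 H2].
  exists (Nat.max N1 N2). intros n Hn. split; apply side_of_ray; [apply H1|apply H2]; lia.
Qed.

Lemma ray_not_separated_from_both r F1 F2 :
  is_ray adj r -> separates adj F1 r ra -> separates adj F2 r rb -> False.
Proof.
  intros Hr H1 H2.
  destruct (two_ends r Hr) as [E|E]; [exact (separates_not_equiv adj _ _ _ H1 E)|].
  exact (separates_not_equiv adj _ _ _ H2 E).
Qed.

Lemma outside_sides_finite : exists L, forall v, ~ Sa v -> ~ Sb v -> In v L.
Proof.
  destruct sides_eventually as [N HN].
  destruct (rayless_region_finite adj nbrs adj_sym nbrs_spec connected K
              (fun v => ~ In v K /\ ~ Sa v /\ ~ Sb v)) as [L HL].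
  - intros v w [H1 [H2 H3]] HvK Hvw HwK. split; [exact HwK|split].
    + intro Hw. apply H2, (side_closed adj adj_sym K ra w v); auto.
    + intro Hw. apply H3, (side_closed adj adj_sym K rb w v); auto.
  - intros v [H _]. exact H.
  - intros r Hr Hin. eapply (ray_not_separated_from_both r _ _ Hr).
    + apply (closed_off_separates adj K (fun v => ~ Sa v) r ra 0 N).
      * apply (closed_off_compl adj adj_sym), (side_closed adj adj_sym).
      * intros a _. apply Hin.
      * intros b Hb H. apply H, (HN b Hb).
    + apply (closed_off_separates adj K (fun v => ~ Sb v) r rb 0 N).
      * apply (closed_off_compl adj adj_sym), (side_closed adj adj_sym).
      * intros a _. apply Hin.
      * intros b Hb H. apply H, (HN b Hb).
  - exists ra. exact ra_ray.
  - exists (K ++ L). intros v H1 H2. apply in_or_app.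
    destruct (classic (In v K)); auto.
Qed.

Lemma off_side_connected v :
  ~ Sa v -> exists n f, walk adj v k0 n f /\ within (fun x => ~ Sa x) n f.
Proof.
  intro Hv.
  assert (HK : forall k, In k K -> exists n f, walk adj k k0 n f /\ within (fun x => ~ Sa x) n f).
  { intros k Hk. destruct (K_connected k Hk) as [n [f [Hf Hi]]]. exists n. eexists.
    split; [apply (walk_rev adj adj_sym _ _ _ _ Hf)|].
    intros i Hi' HS. apply (side_notin adj K ra _ HS), Hi. lia. }
  destruct (classic (In v K)) as [HvK|HvK]; [apply HK, HvK|].
  destruct (connected v k0) as [n [f Hf]].
  destruct (ex_least_nat (fun i => i <= n /\ In (f i) K)) as [i0 [[Hi0n Hi0K] Hleast]].
  { exists n. split; [lia|]. destruct Hf as [_ [_ Hn]]. rewrite Hn. exact k0_in_K. }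
  destruct (HK _ Hi0K) as [m [g [Hg Hgi]]].
  pose proof (walk_prefix adj _ _ _ _ _ Hf Hi0n) as Hpre.
  exists (i0 + m). eexists. split; [eapply walk_app; eauto|]. apply within_app; auto.
  intros i Hi HS. destruct (Nat.eq_dec i i0) as [->|Hne].
  - exact (side_notin adj K ra _ HS Hi0K).
  - apply Hv. destruct (walk_rev adj adj_sym _ _ _ _ (walk_prefix adj _ _ _ _ i Hf ltac:(lia)))
      as [Hrp [Hr0 Hrn]].
    rewrite <- Hrn. apply (path_stays adj K Sa i _ (side_closed adj adj_sym K ra) Hrp).
    + rewrite Hr0. exact HS.
    + intros j Hj HjK. assert (Hjn : i - j <= n) by lia.
      specialize (Hleast (i - j) (conj Hjn HjK)). lia.
Qed.

End TwoSides.

Section Cayley.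
Variable G : group.
Variable S : list G.
Local Infix "**" := (@gmul G) (at level 40, left associativity).
Local Notation adj := (cayley_adj S).

Lemma in_symm_ginv (x : G) : in_symm S x -> in_symm S (ginv x).
Proof. intros [H|H]; [right; rewrite ginvK|left]; exact H. Qed.

Lemma cayley_adj_sym (g h : G) : adj g h -> adj h g.
Proof. intro H. apply in_symm_ginv in H. rewrite ginvM, ginvK in H. exact H. Qed.

Lemma cayley_adj_rmul (g h y : G) : adj (g ** y) (h ** y) <-> adj g h.
Proof. unfold cayley_adj. rewrite ginvM, gmulA, gmulK. reflexivity. Qed.

Lemma cayley_adj_irrefl (g : G) : ~ In gone S -> ~ adj g g.
Proof. intros H1 H. unfold cayley_adj, in_symm in H. rewrite gmulV_r, ginv1 in H. tauto. Qed.

Lemma rmul_automorphism (y : G) : is_automorphism G adj (fun x => x ** y).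
Proof.
  split.
  - exists (fun x => x ** ginv y). split; intro x; [apply gmulK|apply gmulKV].
  - intros x x'. symmetry. apply cayley_adj_rmul.
Qed.

Definition cayley_nbrs (u : G) : list G := map (fun s => s ** u) (S ++ map ginv S).

Lemma cayley_nbrs_spec u w : adj u w -> In w (cayley_nbrs u).
Proof.
  intro H. apply in_map_iff. exists (w ** ginv u). split; [apply gmulKV|].
  apply in_or_app. destruct H as [H|H]; [left; exact H|right].
  apply in_map_iff. exists (ginv (w ** ginv u)). split; [apply ginvK|exact H].
Qed.

Lemma word_walk (w : list G) a : (forall x, In x w -> in_symm S x) ->
  exists n f, walk adj a (word_prod w ** a) n f.
Proof.
  induction w as [|x w IH]; intro Hx.
  - exists 0, (fun _ => a). simpl. rewrite gmul1. apply walk_nil.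
  - destruct IH as [n [f Hf]]; [intros y Hy; apply Hx; right; exact Hy|].
    exists (n + 1). eexists. eapply walk_app; [exact Hf|apply walk_one].
    unfold cayley_adj. simpl. rewrite ginvM, gmulA, !gmulK. apply Hx. left. reflexivity.
Qed.

Lemma cayley_connected : generates S -> forall a b, exists n f, walk adj a b n f.
Proof.
  intros Hgen a b. destruct (Hgen (b ** ginv a)) as [w [Hw Hwb]].
  destruct (word_walk w a Hw) as [n [f Hf]]. rewrite Hwb, gmulKV in Hf. eauto.
Qed.

Lemma walk_rmul a b n f y : walk adj a b n f -> walk adj (a ** y) (b ** y) n (fun i => f i ** y).
Proof.
  intros [Hp [H0 Hn]]. split; [|split; congruence].
  intros i Hi. apply cayley_adj_rmul, Hp, Hi.
Qed.

Lemma ray_rmul r y : is_ray adj r -> is_ray adj (fun n => r n ** y).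
Proof.
  intros [Hi Ha]. split.
  - intros m n E. apply Hi, (gmul_cancel_r G y), E.
  - intro n. apply cayley_adj_rmul, Ha.
Qed.

Definition rmul_list (L : list G) (y : G) : list G := map (fun k => k ** y) L.

Lemma in_rmul_list L y v : In v (rmul_list L y) <-> In (v ** ginv y) L.
Proof.
  unfold rmul_list. rewrite in_map_iff. split.
  - intros [k [<- Hk]]. rewrite gmulK. exact Hk.
  - intro H. exists (v ** ginv y). split; [apply gmulKV|exact H].
Qed.

Lemma closed_off_rmul K W x : closed_off adj K W ->
  closed_off adj (rmul_list K x) (fun v => W (v ** ginv x)).
Proof.
  intros H v w Hv HvK Hvw HwK. rewrite in_rmul_list in HvK, HwK.
  apply (H (v ** ginv x)); auto. apply cayley_adj_rmul, Hvw.
Qed.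

End Cayley.

Section SideTranslations.
Variable G : group.
Variable S0 : list G.
Local Infix "**" := (@gmul G) (at level 40, left associativity).
Local Notation adj := (cayley_adj S0).
Local Notation adj_sym := (cayley_adj_sym G S0).
Hypothesis gen : generates S0.
Local Notation connected := (cayley_connected G S0 gen).

Variables ra rb : nat -> G.
Hypothesis ra_ray : is_ray adj ra.
Hypothesis rb_ray : is_ray adj rb.
Hypothesis two_ends : forall r, is_ray adj r -> rays_equiv G adj r ra \/ rays_equiv G adj r rb.

Variable K : list G.
Variable k0 : G.
Hypothesis k0_in_K : In k0 K.
Hypothesis K_connected :
  forall k, In k K -> exists n f, walk adj k0 k n f /\ within (fun v => In v K) n f.
Hypothesis K_separates : separates adj K ra rb.

Local Notation Sa := (side adj K ra).
Local Notation Sb := (side adj K rb).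

(* Translate [k0] far out along [ra], beyond every translate of [K] meeting [K]. *)
Lemma translate_K_into_side : exists x, forall k, In k K -> Sa (k ** x).
Proof.
  destruct (sides_eventually adj ra rb ra_ray rb_ray K) as [N HN].
  set (Fb := flat_map (fun k => map (fun k' => k0 ** ginv k ** k') K) K).
  destruct (ray_eventually_avoids adj ra Fb ra_ray) as [N1 HN1].
  set (n := Nat.max N N1).
  exists (ginv k0 ** ra n). intros k Hk.
  destruct (K_connected k Hk) as [m [f [Hf Hi]]].
  destruct (walk_rmul G S0 _ _ _ _ (ginv k0 ** ra n) Hf) as [Hp [H0 Hm]]. rewrite <- Hm.
  apply (path_stays adj K Sa m _ (side_closed adj adj_sym K ra) Hp).
  - rewrite H0, gmulA, gmulV_r, gmul1. apply HN. lia.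
  - intros i Hii Hin. apply (HN1 n); [lia|]. apply in_flat_map.
    exists (f i). split; [apply Hi, Hii|]. apply in_map_iff.
    exists (f i ** (ginv k0 ** ra n)). split; [|exact Hin].
    rewrite !gmulA, gmulKV, gmulV_r, gmul1. reflexivity.
Qed.

Section Translate.
Variable x : G.
Hypothesis Kx_side : forall k, In k K -> Sa (k ** x).

(* The complement of [Sa] is connected and avoids [rmul_list K x], so it is mapped by
   [x^-1] into a single component of the complement of [K]. *)
Lemma off_side_translate_uniform (W : G -> Prop) : closed_off adj K W ->
  forall v, ~ Sa v -> (W (k0 ** ginv x) <-> W (v ** ginv x)).
Proof.
  intros Hc v Hv. destruct (off_side_connected adj adj_sym connected ra K k0 k0_in_K
                              K_connected v Hv) as [n [f [Hf Hi]]].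
  pose proof (closed_off_rmul G S0 K W x Hc) as Hcx.
  assert (Hav : avoids (rmul_list G K x) n f).
  { intros i Hii Hin. apply in_map_iff in Hin. destruct Hin as [k [Ek Hk]].
    apply (Hi i Hii). rewrite <- Ek. apply Kx_side, Hk. }
  split; intro H.
  - destruct (walk_rev adj adj_sym _ _ _ _ Hf) as [Hp [H0 Hn]]. rewrite <- Hn.
    apply (path_stays adj _ (fun v => W (v ** ginv x)) n _ Hcx Hp).
    + rewrite H0. exact H.
    + intros i Hii. apply Hav. lia.
  - destruct Hf as [Hp [H0 Hn]]. rewrite <- Hn.
    apply (path_stays adj _ (fun v => W (v ** ginv x)) n _ Hcx Hp); [|exact Hav].
    rewrite H0. exact H.
Qed.

(* Otherwise the infinite tail of [rb] would be mapped by [x^-1] into the finite set of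
   vertices outside both sides. *)
Lemma off_side_translate_dichotomy :
  (forall v, ~ Sa v -> Sb (v ** ginv x)) \/ (forall v, ~ Sa v -> Sa (v ** ginv x)).
Proof.
  pose proof (off_side_translate_uniform _ (side_closed adj adj_sym K ra)) as Ea.
  pose proof (off_side_translate_uniform _ (side_closed adj adj_sym K rb)) as Eb.
  destruct (classic (Sb (k0 ** ginv x))) as [H|H].
  { left. intros v Hv. apply (Eb v Hv), H. }
  destruct (classic (Sa (k0 ** ginv x))) as [H'|H'].
  { right. intros v Hv. apply (Ea v Hv), H'. }
  exfalso.
  destruct (outside_sides_finite adj (cayley_nbrs G S0) adj_sym (cayley_nbrs_spec G S0)
              connected ra rb ra_ray rb_ray two_ends K) as [L HL].
  destruct (sides_eventually adj ra rb ra_ray rb_ray K) as [N HN].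
  apply (ray_not_eventually_in adj rb N (rmul_list G L x) rb_ray). intros n Hn.
  assert (Hv : ~ Sa (rb n)).
  { intro Hs. apply (sides_disjoint adj adj_sym ra rb K K_separates (rb n) Hs), HN, Hn. }
  apply in_rmul_list, HL.
  - rewrite <- (Ea _ Hv). exact H'.
  - rewrite <- (Eb _ Hv). exact H.
Qed.

End Translate.

End SideTranslations.

Section Height.
Variable G : group.
Variable S0 : list G.
Local Infix "**" := (@gmul G) (at level 40, left associativity).
Local Notation adj := (cayley_adj S0).
Local Notation adj_sym := (cayley_adj_sym G S0).
Hypothesis gen : generates S0.
Local Notation connected := (cayley_connected G S0 gen).

Variables ra rb : nat -> G.
Hypothesis ra_ray : is_ray adj ra.
Hypothesis rb_ray : is_ray adj rb.
Hypothesis two_ends : forall r, is_ray adj r -> rays_equiv G adj r ra \/ rays_equiv G adj r rb.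

Variable K : list G.
Variable k0 : G.
Hypothesis k0_in_K : In k0 K.
Hypothesis K_separates : separates adj K ra rb.

Local Notation Sa := (side adj K ra).
Local Notation Sb := (side adj K rb).

Variable z : G.
Hypothesis z_shifts : forall v, ~ Sa v -> Sb (v ** ginv z).

Lemma side_rmul_z u : Sa u -> Sa (u ** z).
Proof.
  intro H. apply NNPP. intro H'. apply (sides_disjoint adj adj_sym ra rb K K_separates u H).
  rewrite <- (gmulK G u z). apply z_shifts, H'.
Qed.

Lemma K_rmul_z_side k : In k K -> Sa (k ** z).
Proof.
  intro H. apply NNPP. intro H'. apply (side_notin adj K rb k); [|exact H].
  rewrite <- (gmulK G k z). apply z_shifts, H'.
Qed.

Local Open Scope Z_scope.

(* [above m v]: [v] lies on the side of [ra] of the translate [K z^m] of [K]. *)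
Definition above (m : Z) (v : G) : Prop := Sa (v ** zpow G z (- m)).

Definition K_at (m : Z) : list G := rmul_list G K (zpow G z m).

Lemma above_rmul m j g : above (m + j) (g ** zpow G z j) <-> above m g.
Proof. unfold above. rewrite gmul_zpowD. replace (j + - (m + j)) with (- m) by lia. tauto. Qed.

Lemma above_antitone m m' v : m <= m' -> above m' v -> above m v.
Proof.
  intro Hm. replace m' with (m + Z.of_nat (Z.to_nat (m' - m))) by lia.
  induction (Z.to_nat (m' - m)) as [|d IH]; intro H.
  - rewrite Z.add_0_r in H. exact H.
  - apply IH. unfold above in *. apply side_rmul_z in H. rewrite <- gmulA, <- zpowS in H.
    replace (- (m + Z.of_nat (S d)) + 1) with (- (m + Z.of_nat d)) in H by lia. exact H.
Qed.

Lemma above_zero v : above 0 v <-> Sa v.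
Proof. unfold above. rewrite Z.opp_0, zpow0, gmul1_r. reflexivity. Qed.

Lemma above_closed m : closed_off adj (K_at m) (above m).
Proof.
  apply (closed_off_ext adj _ (fun v => Sa (v ** ginv (zpow G z m)))).
  - intro v. unfold above. rewrite zpowN. reflexivity.
  - apply (closed_off_rmul G S0), (side_closed adj adj_sym).
Qed.

Lemma above_notin m v : above m v -> ~ In v (K_at m).
Proof.
  intros H Hin. apply in_rmul_list in Hin. unfold above in H. rewrite zpowN in H.
  exact (side_notin adj K ra _ H Hin).
Qed.

Lemma K_at_disjoint i j y : i < j -> In y (K_at i) -> In y (K_at j) -> False.
Proof.
  intros Hij Hi Hj. apply in_rmul_list in Hi, Hj. rewrite <- zpowN in Hi, Hj.
  assert (Hk : above (j - i - 1) (y ** zpow G z (- i))).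
  { unfold above. rewrite gmul_zpowD. replace (- i + - (j - i - 1)) with (- j + 1) by lia.
    rewrite <- (gmul_zpowD G y z (- j) 1), zpow1. apply K_rmul_z_side, Hj. }
  apply (above_antitone 0) in Hk; [|lia]. rewrite above_zero in Hk.
  exact (side_notin adj K ra _ Hk Hi).
Qed.

Lemma not_above_k0 m : 0 <= m -> ~ above m k0.
Proof.
  intros Hm H. apply (above_antitone 0) in H; [|exact Hm]. rewrite above_zero in H.
  exact (side_notin adj K ra k0 H k0_in_K).
Qed.

(* A walk from [v] to [k0] would have to cross the disjoint sets [K_at i], [i >= 0]. *)
Lemma ex_not_above v : exists m, ~ above m v.
Proof.
  apply NNPP. intro Hno.
  assert (Hall : forall m, above m v) by (intro m; apply NNPP; intro H; apply Hno; eauto).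
  destruct (connected v k0) as [n [f [Hp [H0 Hn]]]].
  destruct (pigeonhole_rel (fun i y => In y (K_at (Z.of_nat i))) (map f (seq 0 (S n))))
    as [i [j [y [Hij [Hi Hj]]]]].
  - intro i. destruct (path_crosses adj (K_at (Z.of_nat i)) (above (Z.of_nat i)) n f
                         (above_closed _) Hp) as [a [Ha Hin]].
    + rewrite H0. apply Hall.
    + rewrite Hn. apply not_above_k0. lia.
    + exists (f a). split; [apply in_map_seq; lia|exact Hin].
  - apply (K_at_disjoint (Z.of_nat i) (Z.of_nat j) y); auto. lia.
Qed.

(* Dually, a walk from [v] to the tail of [ra] would cross all [K_at i], [i <= 0]. *)
Lemma ex_above v : exists m, above m v.
Proof.
  apply NNPP. intro Hno.
  assert (Hnone : forall m, ~ above m v) by (intros m H; apply Hno; eauto).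
  destruct (sides_eventually adj ra rb ra_ray rb_ray K) as [N HN].
  destruct (connected v (ra N)) as [n [f [Hp [H0 Hn]]]].
  destruct (pigeonhole_rel (fun i y => In y (K_at (- Z.of_nat i))) (map f (seq 0 (S n))))
    as [i [j [y [Hij [Hi Hj]]]]].
  - intro i. destruct (path_crosses adj (K_at (- Z.of_nat i)) (fun v => ~ above (- Z.of_nat i) v)
                         n f (closed_off_compl adj adj_sym _ _ (above_closed _)) Hp)
      as [a [Ha Hin]].
    + rewrite H0. apply Hnone.
    + rewrite Hn. intro H. apply H, (above_antitone _ 0); [lia|]. rewrite above_zero.
      apply HN. lia.
    + exists (f a). split; [apply in_map_seq; lia|exact Hin].
  - apply (K_at_disjoint (- Z.of_nat j) (- Z.of_nat i) y); auto. lia.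
Qed.

Definition at_height (v : G) (m : Z) : Prop := above m v /\ ~ above (m + 1) v.

Lemma at_height_exists v : exists m, at_height v m.
Proof.
  destruct (ex_above v) as [a Ha]. destruct (ex_not_above v) as [b Hb].
  assert (Hab : a < b).
  { destruct (Z.lt_ge_cases a b) as [H|H]; [exact H|].
    exfalso. apply Hb, (above_antitone _ a); auto. }
  apply (Z_crossing (fun m => above m v) (Z.to_nat (b - a)) a Ha).
  replace (a + Z.of_nat (Z.to_nat (b - a))) with b by lia. exact Hb.
Qed.

Lemma at_height_unique v m m' : at_height v m -> at_height v m' -> m = m'.
Proof.
  intros [H1 H2] [H3 H4]. destruct (Z.lt_trichotomy m m') as [H|[H|H]]; [|exact H|].
  - exfalso. apply H2, (above_antitone _ m'); [lia|exact H3].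
  - exfalso. apply H4, (above_antitone _ m); [lia|exact H1].
Qed.

Lemma ray_rmul_z_equiv : rays_equiv G adj (fun n => ra n ** z) ra.
Proof.
  destruct (two_ends _ (ray_rmul G S0 ra z ra_ray)) as [E|E]; [exact E|exfalso].
  destruct (sides_eventually adj ra rb ra_ray rb_ray K) as [N HN].
  refine (separates_not_equiv adj _ _ _ (closed_off_separates adj K Sa _ rb N N
            (side_closed adj adj_sym K ra) _ _) E).
  - intros a Ha. apply side_rmul_z, HN, Ha.
  - intros b Hb H. apply (sides_disjoint adj adj_sym ra rb K K_separates (rb b) H), HN, Hb.
Qed.

Lemma ra_shift_eventually_not_in_Sb : exists N, forall n, (N <= n)%nat -> ~ Sb (ra n ** ginv z).
Proof.
  destruct (sides_eventually adj ra rb ra_ray rb_ray K) as [N HN].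
  destruct (ray_eventually_avoids adj ra (rmul_list G K z) ra_ray) as [N1 HN1].
  set (N' := Nat.max N N1).
  assert (Htail : forall W, closed_off adj K W -> forall n, (N' <= n)%nat ->
                    (W (ra N' ** ginv z) <-> W (ra n ** ginv z))).
  { intros W HW n Hn.
    apply (ray_tail_closed_off adj adj_sym (rmul_list G K z) (fun v => W (v ** ginv z)));
      [exact ra_ray|intros m Hm; apply HN1; lia|apply closed_off_rmul, HW|exact Hn]. }
  pose proof (Htail _ (side_closed adj adj_sym K ra)) as Ea.
  pose proof (Htail _ (side_closed adj adj_sym K rb)) as Eb.
  exists N'. intros n Hn HB.
  destruct (classic (Sa (ra N' ** ginv z))) as [HA|HA].
  { apply (sides_disjoint adj adj_sym ra rb K K_separates (ra n ** ginv z)); auto.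
    apply (Ea n Hn), HA. }
  destruct (classic (Sb (ra N' ** ginv z))) as [HB'|HB'].
  - (* then [rmul_list K z] would separate [ra z] from [ra] *)
    refine (separates_not_equiv adj _ _ _ (closed_off_separates adj _ (fun v => Sa (v ** ginv z))
              (fun n => ra n ** z) ra N N' (closed_off_rmul G S0 K Sa z
                (side_closed adj adj_sym K ra)) _ _) ray_rmul_z_equiv).
    + intros a Ha. cbv beta. rewrite gmulK. apply HN, Ha.
    + intros b Hb H. apply (sides_disjoint adj adj_sym ra rb K K_separates (ra b ** ginv z) H).
      apply (Eb b Hb), HB'.
  - destruct (outside_sides_finite adj (cayley_nbrs G S0) adj_sym (cayley_nbrs_spec G S0)
                connected ra rb ra_ray rb_ray two_ends K) as [L HL].
    apply (ray_not_eventually_in adj ra N' (rmul_list G L z) ra_ray). intros m Hm.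
    apply in_rmul_list, HL.
    + rewrite <- (Ea m Hm). exact HA.
    + rewrite <- (Eb m Hm). exact HB'.
Qed.

Section HeightFunction.
Variable h : G -> Z.
Hypothesis h_spec : forall v, at_height v (h v).

Lemma height_eq v m : at_height v m -> h v = m.
Proof. intro H. apply (at_height_unique v); auto. Qed.

Lemma height_ge v j : above j v -> j <= h v.
Proof.
  intro H. destruct (h_spec v) as [_ H2]. destruct (Z.le_gt_cases j (h v)) as [Hj|Hj]; auto.
  exfalso. apply H2, (above_antitone _ j); [lia|exact H].
Qed.

Lemma height_rmul_zpow g j : h (g ** zpow G z j) = h g + j.
Proof.
  apply height_eq. destruct (h_spec g) as [H1 H2]. split.
  - apply above_rmul, H1.
  - replace (h g + j + 1) with (h g + 1 + j) by lia. rewrite above_rmul. exact H2.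
Qed.

Lemma height_adj v w : adj v w -> h v - 1 <= h w.
Proof.
  intro Hvw. destruct (h_spec v) as [Hv _].
  destruct (classic (In w (K_at (h v)))) as [Hw|Hw].
  - apply Z.le_trans with (h v - 1); [lia|]. apply height_ge.
    apply in_rmul_list in Hw. rewrite <- zpowN in Hw. unfold above.
    replace (- (h v - 1)) with (- h v + 1) by lia.
    rewrite <- gmul_zpowD, zpow1. apply K_rmul_z_side, Hw.
  - apply Z.le_trans with (h v); [lia|].
    apply height_ge, (above_closed (h v) v w Hv (above_notin _ _ Hv) Hvw Hw).
Qed.

(* Level 0 is [Sa] minus [Sa z]: split along [Sb z] into a rayless region and a
   translate of the finite set outside both sides. *)
Lemma height0_finite : exists L, forall u, h u = 0 -> In u L.
Proof.
  destruct (sides_eventually adj ra rb ra_ray rb_ray K) as [N HN].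
  destruct (outside_sides_finite adj (cayley_nbrs G S0) adj_sym (cayley_nbrs_spec G S0)
              connected ra rb ra_ray rb_ray two_ends K) as [LM HLM].
  destruct ra_shift_eventually_not_in_Sb as [N' HN'].
  set (Kz := rmul_list G K z).
  destruct (rayless_region_finite adj (cayley_nbrs G S0) adj_sym (cayley_nbrs_spec G S0)
              connected (K ++ Kz) (fun u => Sa u /\ Sb (u ** ginv z))) as [LR HLR].
  - apply (closed_off_and adj).
    + apply (closed_off_incl adj K); [intros y Hy; apply in_or_app; auto|].
      apply (side_closed adj adj_sym).
    + apply (closed_off_incl adj Kz); [intros y Hy; apply in_or_app; auto|].
      apply (closed_off_rmul G S0), (side_closed adj adj_sym).
  - intros v [H1 H2] Hin. apply in_app_or in Hin. destruct Hin as [Hin|Hin].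
    + exact (side_notin adj K ra v H1 Hin).
    + apply in_rmul_list in Hin. exact (side_notin adj K rb _ H2 Hin).
  - intros r Hr Hin. eapply (ray_not_separated_from_both adj ra rb two_ends r _ _ Hr).
    + apply (closed_off_separates adj Kz (fun v => Sb (v ** ginv z)) r ra 0 N').
      * apply (closed_off_rmul G S0), (side_closed adj adj_sym).
      * intros a _. apply Hin.
      * intros b Hb. apply HN', Hb.
    + apply (closed_off_separates adj K Sa r rb 0 N (side_closed adj adj_sym K ra)).
      * intros a _. apply Hin.
      * intros b Hb H. apply (sides_disjoint adj adj_sym ra rb K K_separates (rb b) H), HN, Hb.
  - exists ra. exact ra_ray.
  - exists (rmul_list G LM z ++ LR). intros u Hu. apply in_or_app.
    destruct (h_spec u) as [H1 H2]. rewrite Hu, above_zero in H1. rewrite Hu in H2.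
    unfold above in H2. rewrite zpowN, zpow1 in H2.
    destruct (classic (Sb (u ** ginv z))) as [HB|HB]; [right; apply HLR; auto|left].
    apply in_rmul_list, HLM; auto.
Qed.

End HeightFunction.

Lemma height_of_translation : exists h : G -> Z,
  (forall g j, h (g ** zpow G z j) = h g + j) /\
  (forall v w, adj v w -> h v - 1 <= h w) /\
  (exists L, forall g, h g = 0 -> In g L).
Proof.
  destruct (choice _ at_height_exists) as [h h_spec].
  exists h. split; [|split].
  - exact (height_rmul_zpow h h_spec).
  - exact (height_adj h h_spec).
  - exact (height0_finite h h_spec).
Qed.

End Height.

Section TwoEndedHeight.
Variable G : group.
Variable S0 : list G.
Local Infix "**" := (@gmul G) (at level 40, left associativity).
Local Notation adj := (cayley_adj S0).
Hypothesis gen : generates S0.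

(* If [x] moves the complement of [Sa] back into [Sa], and [y] does the same for [Sb],
   then [y x] moves the complement of [Sa] into [Sb]. *)
Lemma exists_side_translation (ra rb : nat -> G) (K : list G) (k0 : G) :
  is_ray adj ra -> is_ray adj rb ->
  (forall r, is_ray adj r -> rays_equiv G adj r ra \/ rays_equiv G adj r rb) ->
  In k0 K ->
  (forall k, In k K -> exists n f, walk adj k0 k n f /\ within (fun v => In v K) n f) ->
  separates adj K ra rb ->
  exists z, (forall v, ~ side adj K ra v -> side adj K rb (v ** ginv z)) \/
            (forall v, ~ side adj K rb v -> side adj K ra (v ** ginv z)).
Proof.
  intros Hra Hrb Hends Hk0 Kconn Ksep.
  assert (Hends' : forall r, is_ray adj r -> rays_equiv G adj r rb \/ rays_equiv G adj r ra)
    by (intros r Hr; destruct (Hends r Hr); auto).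
  pose proof (separates_sym adj (cayley_adj_sym G S0) K ra rb Ksep) as Ksep'.
  destruct (translate_K_into_side G S0 ra rb Hra Hrb K k0 Kconn) as [x Hx].
  destruct (off_side_translate_dichotomy G S0 gen ra rb Hra Hrb Hends K k0 Hk0 Kconn Ksep x Hx)
    as [Hab|Haa]; [exists x; left; exact Hab|].
  destruct (translate_K_into_side G S0 rb ra Hrb Hra K k0 Kconn) as [y Hy].
  destruct (off_side_translate_dichotomy G S0 gen rb ra Hrb Hra Hends' K k0 Hk0 Kconn Ksep' y Hy)
    as [Hba|Hbb]; [exists y; right; exact Hba|].
  exists (y ** x). left. intros v Hv. rewrite ginvM, gmulA. apply Hbb. intro Hb.
  exact (sides_disjoint adj (cayley_adj_sym G S0) ra rb K Ksep _ (Haa v Hv) Hb).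
Qed.

Lemma two_ended_height : has_exactly_two_ends adj ->
  exists (z : G) (h : G -> Z),
    (forall g j, h (g ** zpow G z j) = (h g + j)%Z) /\
    (forall v w, adj v w -> (h v - 1 <= h w)%Z) /\
    (exists L, forall g, h g = 0%Z -> In g L).
Proof.
  intros [r1 [r2 [Hr1 [Hr2 [Hne Hends]]]]].
  destruct (not_equiv_separates adj r1 r2 Hne) as [F HF].
  destruct (connected_superset adj (r1 0) F (cayley_connected G S0 gen (r1 0)))
    as [K [Hk0 [HFK Kconn]]].
  pose proof (separates_incl adj F K r1 r2 HFK HF) as Ksep.
  destruct (exists_side_translation r1 r2 K (r1 0) Hr1 Hr2 Hends Hk0 Kconn Ksep)
    as [z [H12|H21]]; exists z.
  - exact (height_of_translation G S0 gen r1 r2 Hr1 Hr2 Hends K (r1 0) Hk0 Ksep z H12).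
  - assert (Hends' : forall r, is_ray adj r -> rays_equiv G adj r r2 \/ rays_equiv G adj r r1)
      by (intros r Hr; destruct (Hends r Hr); auto).
    exact (height_of_translation G S0 gen r2 r1 Hr2 Hr1 Hends' K (r1 0) Hk0
             (separates_sym adj (cayley_adj_sym G S0) K r1 r2 Ksep) z H21).
Qed.

End TwoEndedHeight.

Section StripColoring.
Variable G : group.
Variable S : list G.
Hypothesis S_no_one : ~ In gone S.
Local Infix "**" := (@gmul G) (at level 40, left associativity).
Local Notation adj := (cayley_adj S).

Variable z : G.
Variable h : G -> Z.
Variable C : nat.
Hypothesis h_rmul : forall g j, h (g ** zpow G z j) = (h g + j)%Z.
Hypothesis h_lipschitz : forall g g', adj g g' -> (h g' - h g <= Z.of_nat C)%Z.
Hypothesis h_level0_finite : exists L, forall g, h g = 0%Z -> In g L.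

Local Open Scope Z_scope.

Lemma height_window_finite (a : Z) (W : nat) :
  exists L, forall g, a <= h g < a + Z.of_nat W -> In g L.
Proof.
  destruct h_level0_finite as [L0 HL0].
  exists (flat_map (fun i => map (fun y => y ** zpow G z (a + Z.of_nat i)) L0) (seq 0 W)).
  intros g Hg. apply in_flat_map. exists (Z.to_nat (h g - a)). split; [apply in_seq; lia|].
  apply in_map_iff. exists (g ** zpow G z (- h g)). split.
  - rewrite gmul_zpowD. replace (- h g + (a + Z.of_nat (Z.to_nat (h g - a)))) with 0 by lia.
    rewrite zpow0, gmul1_r. reflexivity.
  - apply HL0. rewrite h_rmul. lia.
Qed.

Lemma height_adj_abs g g' : adj g g' -> Z.abs (h g' - h g) <= Z.of_nat C.
Proof.
  intro H. pose proof (h_lipschitz _ _ H).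
  pose proof (h_lipschitz _ _ (cayley_adj_sym G S _ _ H)). lia.
Qed.

(* Colour [g] by the residue of [h g] modulo [C + 1] and by the position of [g z^(-h g)]
   in the finite level 0. *)
Lemma strip_colorable : exists k, colorable G adj k.
Proof.
  destruct h_level0_finite as [L0 HL0]. set (N := length L0).
  destruct (choice (fun x n => In x L0 -> (n < N)%nat /\ nth n L0 gone = x)) as [idx Hidx].
  { intro x. destruct (classic (In x L0)) as [H|H]; [|exists 0%nat; tauto].
    destruct (In_nth _ _ gone H) as [n Hn]. exists n. auto. }
  set (base := fun g => g ** zpow G z (- h g)).
  assert (Hb : forall g, In (base g) L0) by (intro g; apply HL0; unfold base; rewrite h_rmul; lia).
  set (res := fun g => Z.to_nat (h g mod Z.of_nat (C + 1))).
  assert (Hres : forall g, (res g < C + 1)%nat).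
  { intro g. pose proof (Z.mod_pos_bound (h g) (Z.of_nat (C + 1))). unfold res. lia. }
  exists ((C + 1) * N)%nat, (fun g => res g * N + idx (base g))%nat. split.
  - intro v. pose proof (proj1 (Hidx _ (Hb v))). specialize (Hres v). nia.
  - intros u v Huv E.
    destruct (nat_mul_add_inj _ _ _ _ _ (proj1 (Hidx _ (Hb u))) (proj1 (Hidx _ (Hb v))) E)
      as [Eres Eidx].
    assert (Hh : h u = h v).
    { apply (Z_eq_of_mod_eq _ _ (Z.of_nat (C + 1))); [lia| |].
      - pose proof (height_adj_abs _ _ Huv). lia.
      - unfold res in Eres. pose proof (Z.mod_pos_bound (h u) (Z.of_nat (C + 1))).
        pose proof (Z.mod_pos_bound (h v) (Z.of_nat (C + 1))). lia. }
    assert (Eb : base u = base v).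
    { rewrite <- (proj2 (Hidx _ (Hb u))), <- (proj2 (Hidx _ (Hb v))), Eidx. reflexivity. }
    unfold base in Eb. rewrite Hh in Eb. apply gmul_cancel_r in Eb. subst v.
    exact (cayley_adj_irrefl G S u S_no_one Huv).
Qed.

Section Periodize.
Variable k : nat.
Variable c : G -> nat.
Hypothesis c_proper : proper_coloring adj k c.

(* Pigeonhole on the finitely many colourings of a window of [C + 1] levels. *)
Lemma coloring_repeats : exists m1 P, Z.of_nat C < P /\
  forall g, m1 <= h g <= m1 + Z.of_nat C -> c (g ** zpow G z P) = c g.
Proof.
  destruct (height_window_finite 0 (C + 1)) as [L HL].
  set (W := Z.of_nat C + 1).
  set (pat := fun i : nat => map (fun w => c (w ** zpow G z (Z.of_nat i * W))) L).
  destruct (pigeonhole pat (all_words k (length L))) as [i1 [i2 [Hi12 Ep]]].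
  { intro i. apply in_all_words; [unfold pat; apply length_map|].
    intros x Hx. apply in_map_iff in Hx. destruct Hx as [w [<- _]]. apply c_proper. }
  exists (Z.of_nat i1 * W), ((Z.of_nat i2 - Z.of_nat i1) * W). split; [unfold W; nia|].
  intros g Hg. set (w := g ** zpow G z (- (Z.of_nat i1 * W))).
  assert (Hw : In w L) by (apply HL; unfold w; rewrite h_rmul; lia).
  pose proof (ext_in_map Ep w Hw) as Ew. cbv beta in Ew. unfold w in Ew.
  rewrite !gmul_zpowD in Ew. replace (- (Z.of_nat i1 * W) + Z.of_nat i1 * W) with 0 in Ew by lia.
  rewrite zpow0, gmul1_r in Ew. rewrite Ew. do 3 f_equal. lia.
Qed.

Variables m1 P : Z.
Hypothesis P_large : Z.of_nat C < P.
Hypothesis c_repeats : forall g, m1 <= h g <= m1 + Z.of_nat C -> c (g ** zpow G z P) = c g.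

Definition period_index (g : G) : Z := (h g - m1) / P.
Definition period_base (g : G) : G := g ** zpow G z (- (P * period_index g)).
Definition periodized (g : G) : nat := c (period_base g).

Lemma period_index_bounds g : P * period_index g <= h g - m1 < P * period_index g + P.
Proof.
  unfold period_index. pose proof (Z.div_mod (h g - m1) P ltac:(lia)).
  pose proof (Z.mod_pos_bound (h g - m1) P ltac:(lia)). lia.
Qed.

Lemma period_base_height g : m1 <= h (period_base g) < m1 + P.
Proof. unfold period_base. rewrite h_rmul. pose proof (period_index_bounds g). lia. Qed.

Lemma period_index_rmul g j : period_index (g ** zpow G z (P * j)) = period_index g + j.
Proof.
  unfold period_index. rewrite h_rmul.
  replace (h g + P * j - m1) with (h g - m1 + j * P) by lia. apply Z.div_add. lia.
Qed.

Lemma period_base_rmul g j : period_base (g ** zpow G z (P * j)) = period_base g.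
Proof.
  unfold period_base. rewrite period_index_rmul, gmul_zpowD. do 2 f_equal. lia.
Qed.

(* Within one period block [c] is used as is; across the boundary into the next block the
   colours agree with [c] thanks to [c_repeats]. *)
Lemma periodized_adj_le g g' :
  adj g g' -> period_index g <= period_index g' -> periodized g <> periodized g'.
Proof.
  intros Hgg' Hq.
  set (b := g' ** zpow G z (- (P * period_index g))).
  assert (Hab : adj (period_base g) b) by (apply cayley_adj_rmul, Hgg').
  pose proof (period_index_bounds g). pose proof (period_index_bounds g').
  pose proof (height_adj_abs _ _ Hgg').
  assert (Hq' : period_index g' <= period_index g + 1) by nia.
  unfold periodized. destruct (Z.eq_dec (period_index g') (period_index g)) as [E|E].
  - replace (period_base g') with b by (unfold b, period_base; rewrite E; reflexivity).
    apply c_proper, Hab.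
  - assert (E' : period_index g' = period_index g + 1) by lia. rewrite E' in *.
    replace (period_base g') with (b ** zpow G z (- P))
      by (unfold b, period_base; rewrite gmul_zpowD, E'; do 2 f_equal; lia).
    rewrite <- (c_repeats (b ** zpow G z (- P))) by (unfold b; rewrite !h_rmul; lia).
    rewrite gmul_zpowD, Z.add_opp_diag_l, zpow0, gmul1_r. apply c_proper, Hab.
Qed.

Lemma periodized_proper : proper_coloring adj k periodized.
Proof.
  split; [intro v; apply c_proper|].
  intros u v Huv. destruct (Z.le_gt_cases (period_index u) (period_index v)) as [H|H].
  - apply periodized_adj_le; auto.
  - intro E. apply (periodized_adj_le v u); [apply cayley_adj_sym, Huv|lia|auto].
Qed.

Lemma periodized_periodic : periodic_coloring adj periodized.
Proof.
  destruct (height_window_finite m1 (Z.to_nat P)) as [L HL].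
  exists L. intro v. exists (period_base v). split.
  - apply HL. pose proof (period_base_height v). lia.
  - exists (fun x => x ** zpow G z (P * period_index v)).
    split; [apply rmul_automorphism|split].
    + intro x. unfold periodized. rewrite period_base_rmul. reflexivity.
    + unfold period_base. rewrite gmul_zpowD, Z.add_opp_diag_l, zpow0, gmul1_r. reflexivity.
Qed.

End Periodize.

Lemma strip_chromatic_periodic : exists k, is_chromatic_number adj k /\
  exists c : G -> nat, proper_coloring adj k c /\ periodic_coloring adj c.
Proof.
  destruct (ex_least_nat _ strip_colorable) as [k [[c Hc] Hleast]].
  exists k. split; [split; [exists c; exact Hc|exact Hleast]|].
  destruct (coloring_repeats k c Hc) as [m1 [P [HP Hrep]]].
  exists (periodized c m1 P). split.
  - exact (periodized_proper k c Hc m1 P HP Hrep).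
  - exact (periodized_periodic c m1 P HP).
Qed.

End StripColoring.

Section ChangeOfGenerators.
Variable G : group.
Local Infix "**" := (@gmul G) (at level 40, left associativity).

Lemma word_length_bound (S0 : list G) : generates S0 -> forall l : list G, exists C, forall x,
  In x l -> exists w, (forall y, In y w -> in_symm S0 y) /\ word_prod w = x /\ length w <= C.
Proof.
  intros gen l. induction l as [|a l [C HC]]; [exists 0; intros x []|].
  destruct (gen a) as [w [Hw1 Hw2]]. exists (Nat.max C (length w)). intros x [<-|Hx].
  - exists w. repeat split; auto. lia.
  - destruct (HC x Hx) as [w' [H1 [H2 H3]]]. exists w'. repeat split; auto. lia.
Qed.

Variable S0 : list G.
Variable h : G -> Z.
Hypothesis h_step : forall v w, cayley_adj S0 v w -> (h v - 1 <= h w)%Z.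

Lemma height_word_bound (w : list G) g : (forall y, In y w -> in_symm S0 y) ->
  (h (word_prod w ** g) <= h g + Z.of_nat (length w))%Z.
Proof.
  revert g. induction w as [|s w IH]; intros g Hw; simpl word_prod.
  - rewrite gmul1. simpl. lia.
  - assert (Hadj : cayley_adj S0 (s ** word_prod w ** g) (word_prod w ** g)).
    { apply cayley_adj_sym. unfold cayley_adj. rewrite ginvM, gmulA, !gmulK.
      apply Hw. left. reflexivity. }
    pose proof (h_step _ _ Hadj).
    specialize (IH g (fun y Hy => Hw y (or_intror Hy))). rewrite <- gmulA in *.
    simpl length. lia.
Qed.

Lemma height_step_bound (S : list G) : generates S0 ->
  exists C : nat, forall g g', cayley_adj S g g' -> (h g' - h g <= Z.of_nat C)%Z.
Proof.
  intro gen. destruct (word_length_bound S0 gen (S ++ map ginv S)) as [C HC].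
  exists C. intros g g' Hgg'.
  assert (Hx : In (g' ** ginv g) (S ++ map ginv S)).
  { apply in_or_app. destruct Hgg' as [H|H]; [left; exact H|right].
    apply in_map_iff. exists (ginv (g' ** ginv g)). split; [apply ginvK|exact H]. }
  destruct (HC _ Hx) as [w [Hw [Hwx Hlen]]].
  pose proof (height_word_bound w g Hw) as Hb. rewrite Hwx, gmulKV in Hb. lia.
Qed.

End ChangeOfGenerators.

Theorem theorem5p2 (Gam : group) (S : list Gam) :
  group_two_ended Gam ->
  generates S ->
  ~ In gone S ->
  exists k, is_chromatic_number (cayley_adj S) k /\
    exists c : Gam -> nat,
      proper_coloring (cayley_adj S) k c /\ periodic_coloring (cayley_adj S) c.
Proof.
  intros [S0 [gen0 ends0]] _ S_no_one.
  destruct (two_ended_height Gam S0 gen0 ends0) as [z [h [h_rmul [h_step h_level0]]]].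
  destruct (height_step_bound Gam S0 h h_step S gen0) as [C HC].
  exact (strip_chromatic_periodic Gam S S_no_one z h C h_rmul HC h_level0).
Qed.
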